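(* Let $\Sigma_1$, $\Sigma_2$ be real, symmetric, positive definite $d\times d$ matrices and let $\varepsilon>0$. Then the unique symmetric, positive definite solution $X$ of the matrix equation $$X\Sigma_1X+\tfrac{\varepsilon}{2}X=\Sigma_2$$ is $$X_\varepsilon=\Sigma_1^{-1/2}\big(\Sigma_1^{1/2}\Sigma_2\Sigma_1^{1/2}+(\tfrac{\varepsilon}{4})^2 I_d\big)^{1/2}\Sigma_1^{-1/2}-\tfrac{\varepsilon}{4}\Sigma_1^{-1}.$$ Furthermore, the $2d\times 2d$ matrix $$\Sigma_\varepsilon=\begin{bmatrix}\Sigma_1 & \Sigma_1X_\varepsilon\\ X_\varepsilon\Sigma_1 & \Sigma_2\end{bmatrix}$$ is real, symmetric and positive definite, and $$\Sigma_\varepsilon^{-1}=\begin{bmatrix}\Sigma_1^{-1}+\frac{2}{\varepsilon}X_\varepsilon & -\frac{2}{\varepsilon}I_d\\ -\frac{2}{\varepsilon}I_d & \frac{2}{\varepsilon}X_\varepsilon^{-1}\end{bmatrix}.$$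
   Context: $A^{1/2}$ denotes the unique symmetric positive definite square root of a symmetric positive definite matrix $A$; $I_d$ is the $d\times d$ identity matrix. *)

From HB Require Import structures.
From mathcomp Require Import all_boot all_order all_algebra.
From mathcomp Require Import boolp classical_sets reals.
Set Implicit Arguments. Unset Strict Implicit. Unset Printing Implicit Defensive.
Import Order.TTheory GRing.Theory Num.Theory.
Local Open Scope ring_scope.

Definition symmx (R : realType) (n : nat) (A : 'M[R]_n) : Prop := A^T = A.

Definition spd (R : realType) (n : nat) (A : 'M[R]_n) : Prop :=
  symmx A /\ forall v : 'cV[R]_n, v != 0 -> 0 < (v^T *m A *m v) 0 0.

(* A^{1/2}: the (unique) symmetric positive definite S with S S = A,
   chosen by classical choice; 0 if none exists (never happens for spd A). *)
Definition sqrtmx (R : realType) (n : nat) (A : 'M[R]_n) : 'M[R]_n :=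
  xget 0 [set S : 'M[R]_n | spd S /\ S *m S = A].

Definition Xeps (R : realType) (d : nat) (S1 S2 : 'M[R]_d) (eps : R) : 'M[R]_d :=
  invmx (sqrtmx S1) *m
    sqrtmx (sqrtmx S1 *m S2 *m sqrtmx S1 + (eps / 4) ^+ 2 *: 1%:M)
  *m invmx (sqrtmx S1) - (eps / 4) *: invmx S1.

Definition Sigeps (R : realType) (d : nat) (S1 S2 : 'M[R]_d) (eps : R)
  : 'M[R]_(d + d) :=
  block_mx S1 (S1 *m Xeps S1 S2 eps) (Xeps S1 S2 eps *m S1) S2.

(* Let s be the positive square root of S1 and c = eps / 4.  The identity
   (s Y s + c)^2 = s (Y S1 Y + (eps / 2) Y) s + c^2 shows that Y solves the
   equation iff s Y s + c is a positive definite square root of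
   s S2 s + c^2 =: r^2.  Since such square roots are unique, this gives both
   the formula X = s^-1 (r - c) s^-1 and the uniqueness of the solution; X is
   positive definite because r - c is, as r^2 - c^2 = s S2 s is.  For
   v = (a, b) one has v^T Sigma v = (a + X b)^T S1 (a + X b) + (eps / 2) b^T X b,
   whence Sigma is positive definite, and its inverse is checked blockwise.
   Square roots come from the orthogonal diagonalisation of real symmetric
   matrices, built by induction from a real eigenvector and a Householder
   reflection. *)

From HB Require Import structures.
From mathcomp Require Import all_boot all_order all_algebra.
From mathcomp Require Import boolp classical_sets reals.
From mathcomp Require Import complex spectral.
From mathcomp Require Import lra ring.
Import Order.TTheory GRing.Theory Num.Theory.

Set Implicit Arguments.
Unset Strict Implicit.
Unset Printing Implicit Defensive.

Local Open Scope ring_scope.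

Section PositiveDefinite.
Variable R : realType.
Implicit Types n : nat.

Lemma rv_norm2E n (u : 'rV[R]_n) : (u *m u^T) 0 0 = \sum_j u 0 j ^+ 2.
Proof. by rewrite mxE; apply: eq_bigr => j _; rewrite mxE expr2. Qed.

Lemma rv_norm2_ge0 n (u : 'rV[R]_n) : 0 <= (u *m u^T) 0 0.
Proof. by rewrite rv_norm2E sumr_ge0 // => j _; rewrite sqr_ge0. Qed.

Lemma rv_norm2_eq0 n (u : 'rV[R]_n) : ((u *m u^T) 0 0 == 0) = (u == 0).
Proof.
rewrite rv_norm2E psumr_eq0 => [|j _]; last by rewrite sqr_ge0.
apply/idP/eqP => [/allP u0 | ->]; last first.
  by apply/allP => j _; rewrite mxE expr2 mulr0 eqxx.
apply/rowP => j; rewrite mxE; apply/eqP; rewrite -sqrf_eq0.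
exact: u0 (mem_index_enum j).
Qed.

Lemma spd_quad_ge0 n (A : 'M[R]_n) (v : 'cV_n) : spd A -> 0 <= (v^T *m A *m v) 0 0.
Proof.
move=> [_ A_pos]; have [->|v_neq0] := eqVneq v 0; first by rewrite mulmx0 mxE.
exact/ltW/A_pos.
Qed.

Lemma spd_unit n (A : 'M[R]_n) : spd A -> A \in unitmx.
Proof.
move=> [_ A_pos]; rewrite unitmxE unitfE; apply/det0P => -[v v_neq0 vA].
have vT_neq0 : v^T != 0 by rewrite -(inj_eq (@trmx_inj _ _ _)) trmxK trmx0.
by have := A_pos _ vT_neq0; rewrite trmxK vA mul0mx mxE ltxx.
Qed.

Lemma spd_congr n (A P : 'M[R]_n) : spd A -> P \in unitmx -> spd (P^T *m A *m P).
Proof.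
move=> [A_sym A_pos] P_unit; split; first by rewrite /symmx !trmx_mul trmxK A_sym mulmxA.
move=> v v_neq0; have Pv_neq0 : P *m v != 0.
  by apply: contraNneq v_neq0 => Pv0; rewrite -(mulKmx P_unit v) Pv0 mulmx0.
by have := A_pos _ Pv_neq0; rewrite trmx_mul !mulmxA.
Qed.

Lemma spdZ n (a : R) (A : 'M[R]_n) : 0 < a -> spd A -> spd (a *: A).
Proof.
move=> a_gt0 [A_sym A_pos]; split; first by rewrite /symmx linearZ /= A_sym.
move=> v /A_pos vAv_gt0; rewrite -scalemxAr -scalemxAl [X in 0 < X]mxE.
exact: mulr_gt0.
Qed.

Lemma spd_add_scalar n (A : 'M[R]_n) (a : R) : spd A -> 0 <= a -> spd (A + a%:M).
Proof.
move=> [A_sym A_pos] a_ge0; split; first by rewrite /symmx linearD /= A_sym tr_scalar_mx.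
move=> v /A_pos vAv_gt0; rewrite mulmxDr mulmxDl mul_mx_scalar -scalemxAl.
rewrite [X in 0 < X]mxE [X in 0 < _ + X]mxE.
have := rv_norm2_ge0 v^T; rewrite trmxK => vv_ge0.
by rewrite ltr_pwDl // mulr_ge0.
Qed.

Lemma mxtrace_congr n (A B : 'M[R]_n) :
  \tr (B^T *m A *m B) = \sum_i ((col i B)^T *m A *m col i B) 0 0.
Proof.
apply: eq_bigr => i _; rewrite !mxE; apply: eq_bigr => k _; rewrite !mxE.
by congr (_ * _); apply: eq_bigr => l _; rewrite !mxE.
Qed.

(* With D = S - T, S^2 = T^2 gives S D + D T = 0, hence
   tr (D S D) + tr (D T D) = 0, a sum of two nonnegative terms. *)
Lemma spd_sqr_inj n (S T : 'M[R]_n) : spd S -> spd T -> S *m S = T *m T -> S = T.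
Proof.
move=> S_spd T_spd ST; pose D := S - T.
have D_sym : D^T = D by rewrite /D linearB /= S_spd.1 T_spd.1.
have SDDT : S *m D + D *m T = 0 by rewrite /D mulmxBr mulmxBl ST addrC addrA subrK subrr.
have trE : \tr (D^T *m S *m D) + \tr (D^T *m T *m D) = 0.
  rewrite D_sym -[D *m S *m D]mulmxA [\tr (D *m T *m D)]mxtrace_mulC.
  by rewrite -mxtraceD -mulmxDr SDDT mulmx0 mxtrace0.
have trS_ge0 : 0 <= \tr (D^T *m S *m D).
  by rewrite mxtrace_congr sumr_ge0 // => i _; apply: spd_quad_ge0.
have trT_ge0 : 0 <= \tr (D^T *m T *m D).
  by rewrite mxtrace_congr sumr_ge0 // => i _; apply: spd_quad_ge0.
have /eqP : \tr (D^T *m T *m D) = 0 by lra.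
rewrite mxtrace_congr psumr_eq0 => [/allP colD0|i _]; last exact: spd_quad_ge0.
apply/eqP; rewrite -subr_eq0 -/D; apply/eqP/matrixP => i j.
have col_j0 : ((col j D)^T *m T *m col j D) 0 0 = 0.
  by apply/eqP; exact: colD0 j (mem_index_enum j).
have [colD_j0|/T_spd.2] := eqVneq (col j D) 0; last by rewrite col_j0 ltxx.
by move/matrixP: colD_j0 => /(_ i 0); rewrite !mxE.
Qed.

End PositiveDefinite.

Lemma symmetric_row0_block (R : pzSemiRingType) n (B : 'M[R]_(1 + n)) (a : R) :
  B^T = B -> row 0 B = a *: row 0 1%:M -> B = block_mx a%:M 0 0 (drsubmx B).
Proof.
move=> B_sym B_row0.
have lshift0 : lshift n (0 : 'I_1) = 0 by apply: val_inj.
have B_ur : ursubmx B = 0.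
  apply/matrixP => i j; move/rowP/(_ (rshift 1 j)): B_row0.
  by rewrite !ord1 !mxE lshift0 => ->; rewrite mulr0.
have B_ul : ulsubmx B = a%:M.
  apply/matrixP => i j; move/rowP/(_ 0): B_row0.
  by rewrite !ord1 !mxE lshift0 => ->; rewrite eqxx mulr1.
rewrite -[LHS]submxK B_ul B_ur; congr block_mx.
by rewrite -B_sym -trmx_ursub B_ur trmx0.
Qed.

Section Spectral.
Variable R : realType.
Implicit Types n : nat.

(* The complex spectral theorem makes the eigenvalues of the hermitian
   complexification of A real, and a real root of the characteristic polynomial
   of the complexification is a root of that of A. *)
Lemma symmetric_eigenvalue n (A : 'M[R]_n.+1) : A^T = A -> exists a, eigenvalue A a.
Proof.
move=> A_sym; pose Ac := map_mx (real_complex R) A.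
have Ac_herm : Ac \is hermsymmx.
  apply: realsym_hermsym.
    by apply/is_hermitianmxP; rewrite expr0 scale1r map_mx_id // map_trmx A_sym.
  apply/mxOverP => i j; rewrite mxE realE (_ : 0 = 0%:C)%C //.
  by rewrite ler0c lecR -realE num_real.
have /orthomx_spectralP AcE := hermitian_normalmx Ac_herm.
set P := spectralmx Ac in AcE; set D := spectral_diag Ac in AcE.
have /mxOverP/(_ 0 0) := hermitian_spectral_diag_real Ac_herm.
rewrite -/D => D00_real; have [a D00E] : exists a, D 0 0 = (a%:C)%C.
  move: D00_real; case: (D 0 0) => a b; rewrite realE !lecE /= => b0; exists a.
  by case/orP: b0 => /andP [/eqP b0 _]; [rewrite b0 | rewrite -b0].
exists a; rewrite eigenvalue_root_char -(fmorph_root (real_complex R)).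
rewrite map_char_poly -/Ac -eigenvalue_root_char.
suff : eigenvalue Ac (D 0 0) by rewrite D00E.
have P_unit : P \in unitmx := spectral_unit Ac.
apply/eigenvalueP; exists (row 0 P).
  rewrite -row_mul AcE !mulmxA mulmxV // mul1mx row_mul row_diag_mx.
  by rewrite -scalemxAl -rowE.
apply: contraTneq isT => P0.
have : row 0 P *m invmx P = 0 by rewrite P0 mul0mx.
by rewrite rowE mulmxK // => /rowP/(_ 0); rewrite !mxE !eqxx => /eqP; rewrite oner_eq0.
Qed.

(* H is the Householder reflection exchanging e_0 and u. *)
Lemma orthomx_row0_exists n (u : 'rV[R]_n.+1) : (u *m u^T) 0 0 = 1 ->
  exists2 H : 'M[R]_n.+1, H *m H^T = 1%:M & row 0 H = u.
Proof.
move=> u_norm1; pose e : 'rV[R]_n.+1 := 'e_0; pose w := u - e.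
have [w0|w_neq0] := eqVneq w 0.
  exists 1%:M; first by rewrite trmx1 mulmx1.
  by rewrite rowE mulmx1; move/eqP: w0; rewrite subr_eq0 => /eqP.
have dotE (v : 'rV[R]_n.+1) : (v *m e^T) 0 0 = v 0 0.
  by rewrite trmx_delta -colE mxE.
have dotC (v v' : 'rV[R]_n.+1) : (v *m v'^T) 0 0 = (v' *m v^T) 0 0.
  by rewrite -[in LHS](trmxK (v *m v'^T)) [LHS]mxE trmx_mul trmxK.
have ee : (e *m e^T) 0 0 = 1 by rewrite dotE mxE.
have ue : (u *m e^T) 0 0 = u 0 0 := dotE u.
have eu : (e *m u^T) 0 0 = u 0 0 by rewrite dotC.
pose c := (w *m w^T) 0 0.
have cE : c = 2 - 2 * u 0 0.
  rewrite /c /w linearB /= mulmxBl !mulmxBr.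
  rewrite [u *m u^T]mx11_scalar [u *m e^T]mx11_scalar [e *m u^T]mx11_scalar.
  by rewrite [e *m e^T]mx11_scalar u_norm1 ue eu ee !mxE eqxx /=; ring.
have c_neq0 : c != 0 by rewrite /c rv_norm2_eq0.
pose W := w^T *m w.
have W_sym : W^T = W by rewrite /W trmx_mul trmxK.
have WW : W *m W = c *: W.
  by rewrite /W mulmxA -(mulmxA w^T) [w *m w^T]mx11_scalar mul_mx_scalar -scalemxAl.
pose H := 1%:M - (2 / c) *: W.
have H_sym : H^T = H by rewrite /H linearB /= linearZ /= trmx1 W_sym.
exists H.
  rewrite H_sym /H mulmxBl !mulmxBr mul1mx mulmx1.
  rewrite -!scalemxAl -!scalemxAr WW scalerA scalerA.
  have -> : 2 / c * (2 / c) * c = 2 / c + 2 / c by field.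
  by rewrite scalerDl mul1mx opprB addrK subrK.
rewrite rowE /H mulmxBr mulmx1 -scalemxAr mulmxA -/e.
have -> : e *m w^T = (u 0 0 - 1)%:M.
  rewrite /w linearB /= mulmxBr [e *m u^T]mx11_scalar [e *m e^T]mx11_scalar eu ee.
  by rewrite raddfB.
rewrite mul_scalar_mx scalerA.
have -> : 2 / c * (u 0 0 - 1) = -1 by rewrite cE; field; rewrite -cE.
by rewrite scaleN1r opprK /w addrC subrK.
Qed.

Lemma symmetric_orthodiag n (A : 'M[R]_n) : A^T = A ->
  exists Q : 'M_n, exists D : 'rV_n, Q *m Q^T = 1%:M /\ A = Q^T *m diag_mx D *m Q.
Proof.
elim: n A => [|n IH] A A_sym.
  by exists 1%:M, 0; split; [rewrite trmx1 mulmx1 | rewrite [A]flatmx0 [RHS]flatmx0].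
have [a /eigenvalueP [v vA v_neq0]] := symmetric_eigenvalue A_sym.
pose N := (v *m v^T) 0 0.
have N_gt0 : 0 < N by rewrite lt_def rv_norm2_eq0 v_neq0 rv_norm2_ge0.
pose u := (Num.sqrt N)^-1 *: v.
have u_norm1 : (u *m u^T) 0 0 = 1.
  rewrite /u linearZ /= -scalemxAl -scalemxAr [X in X = _]mxE [X in _ * X = _]mxE.
  by rewrite mulrA -invfM -expr2 sqr_sqrtr ?mulVf ?gt_eqF // ltW.
have uA : u *m A = a *: u by rewrite /u -scalemxAl vA !scalerA mulrC.
have [H HHT H0] := orthomx_row0_exists u_norm1.
have HTH : H^T *m H = 1%:M := mulmx1C HHT.
pose B : 'M[R]_(1 + n) := H *m A *m H^T.
have B_sym : B^T = B by rewrite /B !trmx_mul trmxK A_sym mulmxA.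
have AE : A = H^T *m B *m H by rewrite /B !mulmxA HTH mul1mx -mulmxA HTH mulmx1.
have B_row0 : row 0 B = a *: row 0 1%:M.
  by rewrite /B !row_mul H0 uA -scalemxAl -H0 -row_mul HHT.
have B_dr_sym : (drsubmx B)^T = drsubmx B by rewrite trmx_drsub B_sym.
have [Q' [D' [QQ' BE]]] := IH _ B_dr_sym.
pose K : 'M[R]_(1 + n) := block_mx 1%:M 0 0 Q'.
have KKT : K *m K^T = 1%:M.
  rewrite /K tr_block_mx mulmx_block !trmx0 trmx1 !mulmx0 !mul0mx !mulmx1 QQ'.
  by rewrite !addr0 !add0r -scalar_mx_block.
have KDK : K^T *m diag_mx (row_mx a%:M D') *m K = B.
  rewrite [RHS](symmetric_row0_block B_sym B_row0) BE /K tr_block_mx diag_mx_row.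
  rewrite !mulmx_block !trmx0 trmx1 !mulmx0 !mul0mx !mulmx1 !mul1mx !addr0 !add0r mul0mx.
  by congr block_mx; apply/matrixP => i j; rewrite !ord1 !mxE.
exists (K *m H), (row_mx a%:M D'); split.
  by rewrite trmx_mul mulmxA -(mulmxA K) HHT mulmx1 KKT.
by rewrite AE -KDK trmx_mul !mulmxA.
Qed.

End Spectral.

Lemma quad_diag_mx (R : comPzSemiRingType) n (D : 'rV[R]_n) (w : 'cV[R]_n) :
  (w^T *m diag_mx D *m w) 0 0 = \sum_j D 0 j * w j 0 ^+ 2.
Proof.
rewrite mul_mx_diag mxE; apply: eq_bigr => j _.
by rewrite !mxE mulrAC mulrC expr2.
Qed.

Section OrthoDiag.
Variables (R : realType) (n : nat) (Q : 'M[R]_n).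
Hypothesis Q_orth : Q *m Q^T = 1%:M.

Lemma spd_orthodiagE (D : 'rV[R]_n) :
  spd (Q^T *m diag_mx D *m Q) <-> forall j, 0 < D 0 j.
Proof.
have quadE (w : 'cV_n) :
    w^T *m (Q^T *m diag_mx D *m Q) *m w = (Q *m w)^T *m diag_mx D *m (Q *m w).
  by rewrite trmx_mul !mulmxA.
split => [[_ QDQ_pos] j | D_pos].
  pose v := (row j Q)^T.
  have Qv : Q *m v = ('e_j)^T.
    by rewrite /v -{1}[Q]trmxK -trmx_mul -row_mul Q_orth rowE mulmx1.
  have v_neq0 : v != 0.
    apply: contraTneq isT => v0; move: Qv; rewrite v0 mulmx0 => /matrixP/(_ j 0).
    by rewrite !mxE !eqxx => /eqP; rewrite eq_sym oner_eq0.
  have := QDQ_pos v v_neq0.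
  rewrite quadE Qv quad_diag_mx (bigD1 j) //= big1 => [|k k_neq_j].
    by rewrite !mxE !eqxx expr1n mulr1 addr0.
  by rewrite !mxE (negbTE k_neq_j) expr0n mulr0.
split; first by rewrite /symmx !trmx_mul trmxK tr_diag_mx mulmxA.
move=> v v_neq0; rewrite quadE quad_diag_mx.
have Qv_neq0 : Q *m v != 0.
  apply: contraNneq v_neq0 => Qv0.
  by rewrite -[v]mul1mx -(mulmx1C Q_orth) -mulmxA Qv0 mulmx0.
rewrite lt_def psumr_eq0 => [|j _]; last by rewrite mulr_ge0 ?sqr_ge0 ?ltW.
rewrite sumr_ge0 ?andbT => [|j _]; last by rewrite mulr_ge0 ?sqr_ge0 ?ltW.
apply: contra Qv_neq0 => /allP Qv0; apply/eqP/colP => j; rewrite [RHS]mxE.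
by have := Qv0 j (mem_index_enum j); rewrite mulf_eq0 gt_eqF //= sqrf_eq0 => /eqP.
Qed.

Lemma orthodiagM (D E : 'rV[R]_n) :
  (Q^T *m diag_mx D *m Q) *m (Q^T *m diag_mx E *m Q) =
  Q^T *m diag_mx (\row_j (D 0 j * E 0 j)) *m Q.
Proof.
by rewrite -!mulmxA (mulmxA Q) Q_orth mul1mx (mulmxA (diag_mx D)) mulmx_diag.
Qed.

Lemma orthodiag_add_scalar (D : 'rV[R]_n) (a : R) :
  Q^T *m diag_mx D *m Q + a%:M = Q^T *m diag_mx (\row_j (D 0 j + a)) *m Q.
Proof.
have -> : diag_mx (\row_j (D 0 j + a)) = diag_mx D + a%:M.
  by apply/matrixP => i j; rewrite !mxE; case: (i == j); rewrite ?mulr1n ?mulr0n ?addr0.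
by rewrite mulmxDr mulmxDl mul_mx_scalar -scalemxAl (mulmx1C Q_orth) scalemx1.
Qed.

End OrthoDiag.

Section SquareRoot.
Variable R : realType.
Implicit Types n : nat.

Lemma spd_sqrt_exists n (A : 'M[R]_n) : spd A -> exists2 S, spd S & S *m S = A.
Proof.
move=> A_spd; have [Q [D [Q_orth AE]]] := symmetric_orthodiag A_spd.1.
have D_pos : forall j, 0 < D 0 j by apply/(spd_orthodiagE Q_orth); rewrite -AE.
exists (Q^T *m diag_mx (\row_j Num.sqrt (D 0 j)) *m Q).
  by apply/(spd_orthodiagE Q_orth) => j; rewrite mxE sqrtr_gt0.
rewrite orthodiagM // AE; congr (_ *m diag_mx _ *m _); apply/rowP => j.
by rewrite !mxE -expr2 sqr_sqrtr // ltW.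
Qed.

Lemma sqrtmxP n (A : 'M[R]_n) : spd A -> spd (sqrtmx A) /\ sqrtmx A *m sqrtmx A = A.
Proof.
move=> /spd_sqrt_exists [S S_spd SS].
by apply: (@xgetPex _ 0 [set S | spd S /\ S *m S = A]); exists S.
Qed.

Lemma spd_sub_scalar n (r : 'M[R]_n) (c : R) : spd r -> 0 <= c ->
  spd (r *m r - (c ^+ 2)%:M) -> spd (r - c%:M).
Proof.
move=> r_spd c_ge0; have [Q [D [Q_orth rE]]] := symmetric_orthodiag r_spd.1.
have D_pos : forall j, 0 < D 0 j by apply/(spd_orthodiagE Q_orth); rewrite -rE.
rewrite rE orthodiagM // -!(raddfN (@scalar_mx R n)) !orthodiag_add_scalar //.
rewrite !(spd_orthodiagE Q_orth) => sq_pos j.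
by have := sq_pos j; have := D_pos j; rewrite !mxE => Dj_gt0 Dj2_gt; nra.
Qed.

End SquareRoot.

Lemma sqr_congr_add_scalar (R : comPzRingType) n (s Y : 'M[R]_n) (c : R) :
  (s *m Y *m s + c%:M) *m (s *m Y *m s + c%:M) =
  s *m (Y *m (s *m s) *m Y + (c *+ 2) *: Y) *m s + (c ^+ 2)%:M.
Proof.
rewrite mulmxDl !mulmxDr -scalar_mxM -expr2 mul_mx_scalar mul_scalar_mx.
rewrite mulmxDl -scalemxAr -scalemxAl !mulmxA.
by rewrite mulr2n scalerDl !addrA.
Qed.

Section Riccati.
Variables (R : realType) (d : nat) (S1 S2 : 'M[R]_d) (eps : R).
Hypotheses (S1_spd : spd S1) (S2_spd : spd S2) (eps_gt0 : 0 < eps).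

Let s := sqrtmx S1.
Let c := eps / 4.
Let r := sqrtmx (s *m S2 *m s + c ^+ 2 *: 1%:M).

Let s_spd : spd s := (sqrtmxP S1_spd).1.
Let s_sqr : s *m s = S1 := (sqrtmxP S1_spd).2.
Let s_unit : s \in unitmx := spd_unit s_spd.
Let c_gt0 : 0 < c. Proof. by rewrite divr_gt0. Qed.

Let K_spd : spd (s *m S2 *m s).
Proof. by have := spd_congr S2_spd s_unit; rewrite s_spd.1. Qed.

Let r_spd : spd r /\ r *m r = s *m S2 *m s + c ^+ 2 *: 1%:M.
Proof. by apply: sqrtmxP; rewrite scalemx1; apply: spd_add_scalar; rewrite ?sqr_ge0. Qed.

Let cancel_congr (Y Z : 'M[R]_d) : s *m Y *m s = s *m Z *m s -> Y = Z.
Proof.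
move=> /(congr1 (fun M => invmx s *m M *m invmx s)).
by rewrite !mulmxA !mulVmx // !mul1mx -!mulmxA !mulmxV // !mulmx1.
Qed.

Lemma riccati_sqrtE (Y : 'M[R]_d) : spd Y ->
  Y *m S1 *m Y + (eps / 2) *: Y = S2 <-> s *m Y *m s + c%:M = r.
Proof.
move=> Y_spd; have sqrE := sqr_congr_add_scalar s Y c.
rewrite s_sqr (_ : c *+ 2 = eps / 2) in sqrE; last by rewrite /c; field.
have sYs_spd : spd (s *m Y *m s).
  by have := spd_congr Y_spd s_unit; rewrite s_spd.1.
split => [Y_eq | rE].
  apply: spd_sqr_inj; [exact: spd_add_scalar (ltW c_gt0) | exact: r_spd.1 |].
  by rewrite sqrE Y_eq r_spd.2 scalemx1.
apply/cancel_congr/(addIr (c ^+ 2)%:M).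
by rewrite -sqrE rE r_spd.2 scalemx1.
Qed.

Lemma Xeps_sqrtE : Xeps S1 S2 eps = invmx s *m (r - c%:M) *m invmx s.
Proof.
have S1_inv : invmx S1 = invmx s *m invmx s.
  suff S1_mulV : S1 *m (invmx s *m invmx s) = 1%:M.
    by rewrite -[RHS](mulKmx (spd_unit S1_spd)) S1_mulV mulmx1.
  by rewrite -s_sqr -mulmxA (mulmxA s (invmx s)) mulmxV // mul1mx mulmxV.
by rewrite /Xeps -/s -/c -/r S1_inv mulmxBr mulmxBl mul_mx_scalar -scalemxAl.
Qed.

Lemma Xeps_spd : spd (Xeps S1 S2 eps).
Proof.
have N_spd : spd (r - c%:M).
  apply: spd_sub_scalar; [exact: r_spd.1 | exact: ltW |].
  by rewrite r_spd.2 scalemx1 addrK.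
have si_unit : invmx s \in unitmx by rewrite unitmx_inv.
have := spd_congr N_spd si_unit.
by rewrite trmx_inv s_spd.1 -Xeps_sqrtE.
Qed.

Lemma Xeps_riccati :
  Xeps S1 S2 eps *m S1 *m Xeps S1 S2 eps + (eps / 2) *: Xeps S1 S2 eps = S2.
Proof.
apply/(riccati_sqrtE Xeps_spd); rewrite Xeps_sqrtE !mulmxA mulmxV // mul1mx.
by rewrite -mulmxA mulVmx // mulmx1 subrK.
Qed.

Lemma Xeps_unique (Y : 'M[R]_d) : spd Y ->
  Y *m S1 *m Y + (eps / 2) *: Y = S2 -> Y = Xeps S1 S2 eps.
Proof.
move=> Y_spd /(riccati_sqrtE Y_spd) Y_sqrt.
have /(riccati_sqrtE Xeps_spd) X_sqrt := Xeps_riccati.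
by apply: cancel_congr; apply: (addIr c%:M); rewrite Y_sqrt X_sqrt.
Qed.

End Riccati.

Lemma block_schur_quad (R : comPzRingType) n (A B X : 'M[R]_n) (a b : 'cV[R]_n) :
  X^T = X ->
  (col_mx a b)^T *m block_mx A (A *m X) (X *m A) (X *m A *m X + B) *m col_mx a b =
  (a + X *m b)^T *m A *m (a + X *m b) + b^T *m B *m b.
Proof.
move=> X_sym; have abT : (a + X *m b)^T = a^T + b^T *m X.
  by rewrite linearD /= trmx_mul X_sym.
rewrite tr_col_mx mul_row_block mul_row_col abT !mulmxDl !mulmxDr !mulmxA !addrA.
by rewrite mulmxDl ?mulmxA !addrA (addrAC (a^T *m A *m a)).
Qed.

Lemma spd_block_schur (R : realType) n (A B X : 'M[R]_n) : spd A -> spd B -> X^T = X ->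
  spd (block_mx A (A *m X) (X *m A) (X *m A *m X + B)).
Proof.
move=> A_spd B_spd X_sym; split.
  by rewrite /symmx tr_block_mx linearD /= !trmx_mul A_spd.1 B_spd.1 X_sym mulmxA.
move=> v; rewrite -[v]vsubmxK block_schur_quad //.
move: (usubmx v) (dsubmx v) => a b ab_neq0; rewrite [(_ + _ : 'M_1) 0 0]mxE.
have [b0 | /B_spd.2 bBb_gt0] := eqVneq b 0.
  have a_neq0 : a != 0 by apply: contraNneq ab_neq0 => a0; rewrite a0 b0 col_mx0.
  by rewrite b0 !mulmx0 addr0 [(0 : 'M_1) 0 0]mxE addr0 A_spd.2.
by rewrite ltr_wpDl // spd_quad_ge0.
Qed.

Lemma block_riccati_mulmxV (F : fieldType) n (A X : 'M[F]_n) (k : F) :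
  k != 0 -> A \in unitmx -> X \in unitmx ->
  block_mx A (A *m X) (X *m A) (X *m A *m X + k *: X) *m
  block_mx (invmx A + k^-1 *: X) (- k^-1 *: 1%:M) (- k^-1 *: 1%:M) (k^-1 *: invmx X)
  = 1%:M.
Proof.
move=> k_neq0 A_unit X_unit; rewrite mulmx_block (scalar_mx_block n n 1).
rewrite !mulmxDr -!scalemxAr !mulmx1 !mulmxV // !mulmxK // mulmxDl -scalemxAl mulmxK //.
rewrite !scalerDr scalerA mulVf // scale1r !scaleNr.
congr block_mx; first by rewrite addrK.
- by rewrite addNr.
- by rewrite addrA addrK scalerA mulVf // scale1r subrr.
- by rewrite mulmxV // addKr.
Qed.

Theorem proposition1 (R : realType) (d : nat) (S1 S2 : 'M[R]_d) (eps : R) :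
  spd S1 -> spd S2 -> 0 < eps ->
  let X := Xeps S1 S2 eps in
  [/\ spd X,
      X *m S1 *m X + (eps / 2) *: X = S2,
      (forall Y : 'M[R]_d, spd Y -> Y *m S1 *m Y + (eps / 2) *: Y = S2 -> Y = X),
      spd (Sigeps S1 S2 eps) &
      invmx (Sigeps S1 S2 eps) =
        block_mx (invmx S1 + (2 / eps) *: X) (- (2 / eps) *: 1%:M)
                 (- (2 / eps) *: 1%:M) ((2 / eps) *: invmx X)].
Proof.
move=> S1_spd S2_spd eps_gt0 X.
have X_spd : spd X := Xeps_spd S1_spd S2_spd eps_gt0.
have X_riccati : X *m S1 *m X + (eps / 2) *: X = S2 := Xeps_riccati S1_spd S2_spd eps_gt0.
have SigE : Sigeps S1 S2 eps =
    block_mx S1 (S1 *m X) (X *m S1) (X *m S1 *m X + (eps / 2) *: X).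
  by rewrite X_riccati.
have Sig_mulV : Sigeps S1 S2 eps *m
    block_mx (invmx S1 + (2 / eps) *: X) (- (2 / eps) *: 1%:M)
             (- (2 / eps) *: 1%:M) ((2 / eps) *: invmx X) = 1%:M.
  rewrite SigE -(invf_div eps 2) block_riccati_mulmxV ?spd_unit //.
  by rewrite mulf_neq0 ?invr_eq0 ?gt_eqF.
have [Sig_unit _] := mulmx1_unit Sig_mulV.
split => //; first exact: Xeps_unique.
  rewrite SigE; apply: spd_block_schur => //; last exact: X_spd.1.
  by apply: spdZ; rewrite ?divr_gt0.
by rewrite -[RHS](mulKmx Sig_unit) Sig_mulV mulmx1.
Qed.
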